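(* Let $\mathfrak S$ be a commutative semiring. The set of all proper ideals, the set of all prime ideals, and the set of all strongly irreducible ideals of $\mathfrak S$, each endowed with the ideal topology, are sober spaces.
   Context: A semiring $(\mathfrak S,+,0,\cdot,1)$ has $(\mathfrak S,+,0)$ a commutative monoid, $(\mathfrak S,\cdot,1)$ a monoid, $0r=r0=0$, and two-sided distributivity; all semirings are commutative. An ideal is a nonempty proper subset closed under addition and under multiplication by elements of $\mathfrak S$. Prime: $ab\in\mathfrak p\Rightarrow a\in\mathfrak p$ or $b\in\mathfrak p$. Strongly irreducible: for ideals $\mathfrak a,\mathfrak b$, $\mathfrak a\cap\mathfrak b\subseteq\mathfrak s$ implies $\mathfrak a\subseteq\mathfrak s$ or $\mathfrak b\subseteq\mathfrak s$. For a set $\sigma_{\mathfrak S}$ of ideals and an ideal $\mathfrak a$, $\mathfrak a^{\uparrow}=\{\mathfrak x\in\sigma_{\mathfrak S}\mid\mathfrak a\subseteq\mathfrak x\}$; the ideal topology has these sets as a subbasis of closed sets. Sober: every non-empty irreducible closed subset is the closure of a unique point. *)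

(* commutative semirings are mathcomp's comPzSemiRingType
   (commutative monoid (+,0), multiplicative monoid with unit 1, 0 absorbing, distributivity,
   commutativity; the trivial semiring is allowed). *)
From mathcomp Require Import all_boot all_algebra.
From mathcomp Require Import classical_sets.
Set Implicit Arguments.
Unset Strict Implicit.
Unset Printing Implicit Defensive.
Import GRing.Theory.
Local Open Scope ring_scope.
Local Open Scope classical_set_scope.

Section Ideals.
Variable S : comPzSemiRingType.

Definition is_ideal (I : set S) : Prop :=
  [/\ (exists x, I x), (exists x, ~ I x),
      (forall x y, I x -> I y -> I (x + y)) &
      (forall r x, I x -> I (r * x))].

Definition is_prime (p : set S) : Prop :=
  is_ideal p /\ (forall a b, p (a * b) -> p a \/ p b).

Definition is_strongly_irreducible (s : set S) : Prop :=
  is_ideal s /\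
  (forall a b : set S, is_ideal a -> is_ideal b ->
     a `&` b `<=` s -> a `<=` s \/ b `<=` s).
End Ideals.

Section GenTop.
Variable X : Type.
Variable B : set (set X).

(* the least family containing B, the empty set and the whole space, closed
   under binary unions and arbitrary intersections: the closed sets of the
   topology having B as a subbasis of closed sets *)
Inductive gen_closed : set X -> Prop :=
  | gc_sub A : B A -> gen_closed A
  | gc_empty : gen_closed set0
  | gc_full : gen_closed setT
  | gc_union A1 A2 : gen_closed A1 -> gen_closed A2 -> gen_closed (A1 `|` A2)
  | gc_inter (F : set (set X)) :
      (forall A, F A -> gen_closed A) -> gen_closed (\bigcap_(A in F) A).

Definition gen_closure (A : set X) : set X :=
  \bigcap_(C in [set C | gen_closed C /\ A `<=` C]) C.

Definition gen_irreducible (C : set X) : Prop :=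
  C !=set0 /\
  (forall C1 C2, gen_closed C1 -> gen_closed C2 ->
     C `<=` C1 `|` C2 -> C `<=` C1 \/ C `<=` C2).

Definition gen_sober : Prop :=
  forall C, gen_closed C -> gen_irreducible C ->
    exists! x : X, C = gen_closure [set x].
End GenTop.

Section IdealTop.
Variable S : comPzSemiRingType.
Variable sigma : set (set S).

Definition ideal_space := {I : set S | sigma I}.

Definition up_set (a : set S) : set ideal_space :=
  [set x | a `<=` proj1_sig x].

Definition ideal_subbasis : set (set ideal_space) :=
  [set U | exists a : set S, is_ideal a /\ U = up_set a].

Definition ideal_topology_sober : Prop := gen_sober ideal_subbasis.
End IdealTop.

(* For any family sigma of ideals, the closed sets of the ideal topology are
   upward closed under inclusion, so the closure of a point x is x^up.  If C is
   an irreducible closed set and m is the intersection of its members, then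
   C = m^up: closed sets containing C contain m^up, by induction on closed sets,
   irreducibility handling binary unions.  Hence C is the closure of the point
   m as soon as m belongs to sigma, and that point is unique because x^up
   determines x.  It remains to see that m is in sigma: it is an ideal since C
   is nonempty; it is prime when sigma consists of primes, because
   [ab in m] puts C inside the union of the closed sets {x | a in x} and
   {x | b in x}; and it is strongly irreducible when sigma consists of strongly
   irreducible ideals, because [a `&` b <= m] puts C inside a^up `|` b^up. *)
From mathcomp Require Import all_boot all_algebra.
From mathcomp Require Import boolp classical_sets.
Set Implicit Arguments.
Unset Strict Implicit.
Unset Printing Implicit Defensive.
Import GRing.Theory.
Local Open Scope ring_scope.
Local Open Scope classical_set_scope.

Lemma ideal0 (S : comPzSemiRingType) (I : set S) : is_ideal I -> I 0.
Proof. by case=> [[x Ix] _ _ IM]; rewrite -(mul0r x); apply: IM. Qed.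

Section IdealTopology.
Variables (S : comPzSemiRingType) (sigma : set (set S)).
Hypothesis sigma_ideal : forall I, sigma I -> is_ideal I.

Local Notation X := (ideal_space sigma).
Local Notation closed := (gen_closed (@ideal_subbasis _ sigma)).
Local Notation irreducible := (gen_irreducible (@ideal_subbasis _ sigma)).
Local Notation up := (@up_set _ sigma).

Definition meet_ideals (C : set X) : set S := \bigcap_(x in C) proj1_sig x.

Lemma up_set_closed (a : set S) : is_ideal a -> closed (up a).
Proof. by move=> a_ideal; apply: gc_sub; exists a. Qed.

Lemma closed_upward (D : set X) (x y : X) :
  closed D -> D x -> proj1_sig x `<=` proj1_sig y -> D y.
Proof.
move=> closedD; elim: closedD x y => {D} //.
- by move=> _ [a [_ ->]] x y ax xy; apply: subset_trans xy.
- move=> A1 A2 _ IH1 _ IH2 x y [A1x|A2x] xy.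
  + by left; apply: IH1 xy.
  + by right; apply: IH2 xy.
- by move=> F _ IH x y Fx xy A FA; apply: IH (Fx A FA) xy.
Qed.

Lemma gen_closure_point (x : X) :
  gen_closure (@ideal_subbasis _ sigma) [set x] = up (proj1_sig x).
Proof.
apply/seteqP; split=> [y|y xy D [closedD xD]].
- by apply; split; [apply/up_set_closed/sigma_ideal/(proj2_sig x)|move=> _ ->].
- exact: closed_upward closedD (xD x erefl) xy.
Qed.

Lemma up_set_point_inj (x y : X) : up (proj1_sig x) = up (proj1_sig y) -> x = y.
Proof.
case: x y => [I sI] [J sJ] /= upIJ.
have JI : up J (exist _ I sI) by rewrite -upIJ.
have IJ : up I (exist _ J sJ) by rewrite upIJ.
by apply: eq_exist; apply/seteqP; split.
Qed.

Lemma irreducible_up_meet_sub (C D : set X) :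
  irreducible C -> closed D -> C `<=` D -> up (meet_ideals C) `<=` D.
Proof.
move=> [[c Cc] C_irr] closedD; elim: closedD => {D}.
- move=> _ [a [_ ->]] /= Ca x mx z az.
  by apply: (mx z) => y Cy; apply: Ca.
- by move=> /(_ c Cc).
- by [].
- move=> A1 A2 closed1 IH1 closed2 IH2.
  by move=> /(C_irr _ _ closed1 closed2)[/IH1|/IH2] sub x /sub; [left|right].
- move=> F _ IH CF x mx A FA.
  by apply: IH x mx => // y /CF; apply.
Qed.

Lemma irreducible_closed_up_meet (C : set X) :
  closed C -> irreducible C -> C = up (meet_ideals C).
Proof.
move=> closedC C_irr; apply/seteqP; split.
- by move=> x Cx z; apply.
- exact: irreducible_up_meet_sub.
Qed.

Lemma meet_ideals_is_ideal (C : set X) : C !=set0 -> is_ideal (meet_ideals C).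
Proof.
move=> [c Cc]; split.
- by exists 0 => x _; apply: ideal0; apply: sigma_ideal; exact: proj2_sig x.
- have [_ [z notIz] _ _] := sigma_ideal (proj2_sig c).
  by exists z => /(_ c Cc).
- move=> a b ma mb x Cx; have [_ _ IDx _] := sigma_ideal (proj2_sig x).
  exact: IDx (ma x Cx) (mb x Cx).
- move=> r a ma x Cx; have [_ _ _ IMx] := sigma_ideal (proj2_sig x).
  exact: IMx (ma x Cx).
Qed.

Lemma ideal_topology_soberP :
  (forall C, closed C -> irreducible C -> sigma (meet_ideals C)) ->
  ideal_topology_sober sigma.
Proof.
move=> sigma_meet C closedC C_irr.
have sigma_m := sigma_meet _ closedC C_irr.
rewrite (irreducible_closed_up_meet closedC C_irr).
exists (exist _ _ sigma_m); split=> [|y]; rewrite gen_closure_point //.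
exact: (@up_set_point_inj (exist _ _ sigma_m)).
Qed.

(* When the principal ideal [S a] is all of S, no proper ideal contains [a]
   and the set below is empty. *)
Lemma contains_closed (a : S) : closed [set x : X | proj1_sig x a].
Proof.
pose Sa := [set y : S | exists r, y = r * a].
have contains_Sa (x : X) : proj1_sig x a <-> Sa `<=` proj1_sig x.
  have [_ _ _ IMx] := sigma_ideal (proj2_sig x).
  by split=> [xa _ [r ->]|/(_ a)]; [apply: IMx|apply; exists 1; rewrite mul1r].
have [[z notSaz]|Sa_full] := pselect (exists z, ~ Sa z).
- have -> : [set x : X | proj1_sig x a] = up Sa.
    by apply/seteqP; split=> x /contains_Sa.
  apply: up_set_closed; split; last 2 first.
  + by move=> _ _ [r ->] [s ->]; exists (r + s); rewrite mulrDl.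
  + by move=> r _ [s ->]; exists (r * s); rewrite mulrA.
  + by exists a, 1; rewrite mul1r.
  + by exists z.
- have -> : [set x : X | proj1_sig x a] = set0; last exact: gc_empty.
  apply/seteqP; split=> // x /contains_Sa SAx.
  have [_ [z notxz] _ _] := sigma_ideal (proj2_sig x).
  by apply: notxz; apply: SAx; apply: contrapT => notSaz; apply: Sa_full; exists z.
Qed.

End IdealTopology.

Section PrimeSpectrum.
Variables (S : comPzSemiRingType) (sigma : set (set S)).
Hypothesis sigma_prime : forall p, sigma p -> is_prime p.

Let sigma_ideal p (sp : sigma p) : is_ideal p := (sigma_prime sp).1.

Lemma meet_ideals_is_prime (C : set (ideal_space sigma)) :
  gen_irreducible (@ideal_subbasis _ sigma) C -> is_prime (meet_ideals C).
Proof.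
move=> [C_nonempty C_irr]; split; first exact: meet_ideals_is_ideal.
move=> a b mab.
have C_sub : C `<=` [set x | proj1_sig x a] `|` [set x | proj1_sig x b].
  by move=> x Cx; apply: (sigma_prime (proj2_sig x)).2; apply: mab.
have [sub|sub] := C_irr _ _ (contains_closed sigma_ideal a)
                            (contains_closed sigma_ideal b) C_sub;
  by [left|right] => x /sub.
Qed.

End PrimeSpectrum.

Section StronglyIrreducibleSpectrum.
Variables (S : comPzSemiRingType) (sigma : set (set S)).
Hypothesis sigma_si : forall s, sigma s -> is_strongly_irreducible s.

Let sigma_ideal s (ss : sigma s) : is_ideal s := (sigma_si ss).1.

Lemma meet_ideals_is_strongly_irreducible (C : set (ideal_space sigma)) :
  gen_irreducible (@ideal_subbasis _ sigma) C ->
  is_strongly_irreducible (meet_ideals C).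
Proof.
move=> [C_nonempty C_irr]; split; first exact: meet_ideals_is_ideal.
move=> a b a_ideal b_ideal ab_sub.
have C_sub : C `<=` up_set (sigma:=sigma) a `|` up_set (sigma:=sigma) b.
  move=> x Cx; apply: (sigma_si (proj2_sig x)).2 => // z abz.
  exact: ab_sub abz x Cx.
have [sub|sub] := C_irr _ _ (up_set_closed sigma a_ideal)
                            (up_set_closed sigma b_ideal) C_sub;
  [left|right] => z az x /sub; exact.
Qed.

End StronglyIrreducibleSpectrum.

Theorem corollary3p10 (S : comPzSemiRingType) :
  [/\ ideal_topology_sober (@is_ideal S),
      ideal_topology_sober (@is_prime S) &
      ideal_topology_sober (@is_strongly_irreducible S)].
Proof.
split.
- apply: ideal_topology_soberP => // C _ C_irr.
  exact: meet_ideals_is_ideal C_irr.1.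
- apply: ideal_topology_soberP => [p []//|C _].
  exact: meet_ideals_is_prime.
- apply: ideal_topology_soberP => [s []//|C _].
  exact: meet_ideals_is_strongly_irreducible.
Qed.
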